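(* Let $\mathcal{L}$ be a distributive abstract logic and define $a\le b$ iff $S_a\subseteq S_b$ for $a,b\in Expr_{\mathcal{L}}$, where $S_a=\{P\in PTh_{\mathcal{L}}: a\in P\}$. Then $(Expr_{\mathcal{L}},\le)$ is a distributive lattice with $\inf\{a,b\}=a\wedge b$ and $\sup\{a,b\}=a\vee b$; if $\mathcal{L}$ is bounded, it is a bounded lattice with least element $\bot$ and greatest element $\top$.
   Context: An abstract logic is a triple $\mathcal{L}=(Expr_{\mathcal{L}},Th_{\mathcal{L}},\mathcal{C}_{\mathcal{L}})$ where $Expr_{\mathcal{L}}$ is a set, $Th_{\mathcal{L}}$ a non-empty set of subsets of $Expr_{\mathcal{L}}$ (theories) closed under intersections of non-empty subfamilies, and $\mathcal{C}_{\mathcal{L}}$ a set of operations on $Expr_{\mathcal{L}}$. $\mathcal{L}$ is closed under union of chains if the union of every non-empty chain of theories is a theory. A theory $T$ is prime if $T=\bigcap\mathcal{T}$ with $\mathcal{T}\subseteq Th_{\mathcal{L}}$ non-empty finite implies $T\in\mathcal{T}$; totally prime if this holds for non-empty $\mathcal{T}$ of any size. $PTh_{\mathcal{L}}$, $TPTh_{\mathcal{L}}$ denote these sets. A distributive abstract logic is one closed under union of chains with binary connectives $\vee,\wedge$ such that for all $a,b$ and all $T\in TPTh_{\mathcal{L}}$: $a\vee b\in T$ iff $a\in T$ or $b\in T$; $a\wedge b\in T$ iff $a,b\in T$. It is bounded if moreover there are formulas $\top$ belonging to every theory and $\bot$ belonging to no theory. The paper treats elements $a,b$ with $a\le b$ and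 $b\le a$ as equal (equality $=_{\le}$ induced by the order). *)

From Stdlib Require Import List.

Section AbstractLogic.
Variable E : Type.

Definition bigcap (F : (E -> Prop) -> Prop) : E -> Prop :=
  fun x => forall T, F T -> T x.
Definition bigcup (F : (E -> Prop) -> Prop) : E -> Prop :=
  fun x => exists T, F T /\ T x.
Definition subset (A B : E -> Prop) : Prop := forall x, A x -> B x.
Definition nonempty_fam (F : (E -> Prop) -> Prop) : Prop := exists T, F T.
Definition finite_fam (F : (E -> Prop) -> Prop) : Prop :=
  exists l : list (E -> Prop), forall T, F T <-> In T l.
Definition subfam (F G : (E -> Prop) -> Prop) : Prop := forall T, F T -> G T.

(* (Expr, Th) part of an abstract logic: Th non-empty and closed under
   intersections of non-empty subfamilies. *)
Definition is_abstract_logic (Th : (E -> Prop) -> Prop) : Prop :=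
  nonempty_fam Th /\
  forall F, nonempty_fam F -> subfam F Th -> Th (bigcap F).

Definition is_chain (F : (E -> Prop) -> Prop) : Prop :=
  forall T U, F T -> F U -> subset T U \/ subset U T.

Definition closed_union_chains (Th : (E -> Prop) -> Prop) : Prop :=
  forall F, nonempty_fam F -> subfam F Th -> is_chain F -> Th (bigcup F).

Definition prime_theory (Th : (E -> Prop) -> Prop) (T : E -> Prop) : Prop :=
  Th T /\ forall F, subfam F Th -> nonempty_fam F -> finite_fam F ->
    T = bigcap F -> F T.

Definition totally_prime_theory (Th : (E -> Prop) -> Prop) (T : E -> Prop)
  : Prop :=
  Th T /\ forall F, subfam F Th -> nonempty_fam F -> T = bigcap F -> F T.

Definition distributive_logic (Th : (E -> Prop) -> Prop)
  (vee wedge : E -> E -> E) : Prop :=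
  is_abstract_logic Th /\ closed_union_chains Th /\
  forall a b T, totally_prime_theory Th T ->
    (T (vee a b) <-> T a \/ T b) /\ (T (wedge a b) <-> T a /\ T b).

Definition bounded_logic (Th : (E -> Prop) -> Prop) (top bot : E) : Prop :=
  (forall T, Th T -> T top) /\ (forall T, Th T -> ~ T bot).

Definition le_L (Th : (E -> Prop) -> Prop) (a b : E) : Prop :=
  forall P, prime_theory Th P -> P a -> P b.

Definition eq_L (Th : (E -> Prop) -> Prop) (a b : E) : Prop :=
  le_L Th a b /\ le_L Th b a.
End AbstractLogic.
Arguments bigcap {E}. Arguments bigcup {E}. Arguments subset {E}. Arguments nonempty_fam {E}. Arguments finite_fam {E}. Arguments subfam {E}. Arguments is_abstract_logic {E}. Arguments is_chain {E}. Arguments closed_union_chains {E}. Arguments prime_theory {E}. Arguments totally_prime_theory {E}. Arguments distributive_logic {E}. Arguments bounded_logic {E}. Arguments le_L {E}. Arguments eq_L {E}.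

(* Every theory is the intersection of the totally prime theories containing
   it: by Zorn's lemma (using closure under unions of chains), a theory
   avoiding [a] extends to a maximal such theory, and a maximal theory
   avoiding [a] is totally prime.  Since totally prime theories respect the
   connectives, every theory does so for [wedge], and every prime theory for
   [vee]: a prime theory [P] with [a \/ b] but neither [a] nor [b] would be the
   intersection of the two theories cut out by the totally prime extensions
   of [P] containing [a], resp. [b].  Hence [S_(a /\ b) = S_a ∩ S_b] and
   [S_(a \/ b) = S_a ∪ S_b], and the lattice laws are those of sets. *)
From mathcomp Require classical_sets.
From Stdlib Require Import Classical List FunctionalExtensionality
  PropExtensionality.

Lemma pred_ext (E : Type) (A B : E -> Prop) :
  (forall x, A x <-> B x) -> A = B.
Proof.
intros AB; apply functional_extensionality; intros x.
apply propositional_extensionality, AB.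
Qed.

Section Separation.
Variables (E : Type) (Th : (E -> Prop) -> Prop).
Hypothesis union_chains : closed_union_chains Th.

Definition maximal_avoiding (a : E) (Q : E -> Prop) : Prop :=
  Th Q /\ ~ Q a /\ forall U, Th U -> subset Q U -> ~ U a -> subset U Q.

Lemma maximal_avoiding_totally_prime a Q :
  maximal_avoiding a Q -> totally_prime_theory Th Q.
Proof.
intros [ThQ [Qa Qmax]]; split; [exact ThQ|].
intros F FTh _ QF.
assert (QU : forall U, F U -> subset Q U).
{ intros U FU x Qx; rewrite QF in Qx; exact (Qx U FU). }
destruct (classic (exists U, F U /\ ~ U a)) as [[U [FU Ua]]|all_a].
- replace Q with U; [exact FU|].
  apply pred_ext; intros x; split; [apply (Qmax U (FTh U FU) (QU U FU) Ua)|].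
  apply (QU U FU).
- exfalso; apply Qa; rewrite QF; intros U FU.
  apply NNPP; intros Ua; apply all_a; exists U; auto.
Qed.

(* Zorn's lemma is applied to the sets [V] such that [T ∪ V] is a theory
   avoiding [a]: unlike theories containing [T], these include the union of
   the empty chain. *)
Definition extension_avoiding (T : E -> Prop) (a : E) (V : E -> Prop) : Prop :=
  Th (fun x => T x \/ V x) /\ ~ (T a \/ V a).

Lemma extension_avoiding_bigcup T a F : Th T -> ~ T a ->
  subfam F (extension_avoiding T a) -> is_chain F ->
  extension_avoiding T a (classical_sets.bigcup F (fun X => X)).
Proof.
intros ThT Ta Fext Fchain.
set (U := classical_sets.bigcup F (fun X => X)).
pose (ext V := fun x => T x \/ V x).
destruct (classic (exists V, F V)) as [[V0 FV0]|Fempty].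
- pose (G W := exists V, F V /\ W = ext V).
  assert (extU : ext U = bigcup G).
  { apply pred_ext; intros x; split.
    - intros [Tx|[V FV Vx]].
      + exists (ext V0); split; [exists V0; auto|left; exact Tx].
      + exists (ext V); split; [exists V; auto|right; exact Vx].
    - intros [W [[V [FV ->]] [Tx|Vx]]];
        [left; exact Tx|right; exists V; auto]. }
  split.
  + change (Th (ext U)); rewrite extU; apply union_chains.
    * exists (ext V0), V0; auto.
    * intros W [V [FV ->]]; exact (proj1 (Fext V FV)).
    * intros W W' [V [FV ->]] [V' [FV' ->]].
      destruct (Fchain V V' FV FV') as [VV'|V'V]; [left|right];
        intros x [Tx|Vx]; unfold ext; auto.
  + intros [Ta'|[V FV Va]]; [exact (Ta Ta')|].
    apply (proj2 (Fext V FV)); right; exact Va.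
- assert (extU : ext U = T).
  { apply pred_ext; intros x; split; [|left; assumption].
    intros [Tx|[V FV _]]; [exact Tx|exfalso; apply Fempty; eauto]. }
  split; [change (Th (ext U)); rewrite extU; exact ThT|].
  intros [Ta'|[V FV _]]; [exact (Ta Ta')|apply Fempty; eauto].
Qed.

Lemma maximal_avoiding_exists T a :
  Th T -> ~ T a -> exists Q, subset T Q /\ maximal_avoiding a Q.
Proof.
intros ThT Ta.
destruct (@classical_sets.Zorn_bigcup E (extension_avoiding T a))
  as [A [[ThA Aa] Amax]].
{ intros F Fext Fchain.
  exact (extension_avoiding_bigcup T a F ThT Ta Fext Fchain). }
exists (fun x => T x \/ A x); split; [intros x Tx; left; exact Tx|].
split; [exact ThA|split; [exact Aa|]].
intros U ThU AU Ua.
assert (extU : (fun x => T x \/ U x) = U).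
{ apply pred_ext; intros x; split; [|right; assumption].
  intros [Tx|Ux]; [apply AU; left|]; assumption. }
apply NNPP; intros UA.
apply (Amax U).
- split.
  + intros x Ax; apply AU; right; exact Ax.
  + intros UA'; apply UA; intros x Ux; right; exact (UA' x Ux).
- split; [rewrite extU; exact ThU|].
  intros [Ta'|Ua']; [apply Ua, AU; left|apply Ua]; assumption.
Qed.

Lemma separation T a : Th T -> ~ T a ->
  exists Q, totally_prime_theory Th Q /\ subset T Q /\ ~ Q a.
Proof.
intros ThT Ta.
destruct (maximal_avoiding_exists T a ThT Ta) as [Q [TQ Qmax]].
exists Q; split; [exact (maximal_avoiding_totally_prime a Q Qmax)|].
split; [exact TQ|exact (proj1 (proj2 Qmax))].
Qed.

Lemma theory_totally_prime_meet T x : Th T ->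
  T x <-> forall Q, totally_prime_theory Th Q -> subset T Q -> Q x.
Proof.
intros ThT; split; [intros Tx Q _ TQ; exact (TQ x Tx)|].
intros allQ; apply NNPP; intros Tx.
destruct (separation T x ThT Tx) as [Q [tQ [TQ Qx]]].
exact (Qx (allQ Q tQ TQ)).
Qed.

End Separation.

Lemma prime_theory_meet2 (E : Type) (Th : (E -> Prop) -> Prop) P A B :
  prime_theory Th P -> Th A -> Th B -> (forall x, P x <-> A x /\ B x) ->
  P = A \/ P = B.
Proof.
intros [_ Pprime] ThA ThB PAB.
apply (Pprime (fun U => U = A \/ U = B)).
- intros U [-> | ->]; assumption.
- exists A; left; reflexivity.
- exists (A :: B :: nil); intros U; simpl; split.
  + intros [-> | ->]; auto.
  + intros [<- | [<- | []]]; auto.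
- apply pred_ext; intros x; rewrite PAB; split.
  + intros [Ax Bx] U [-> | ->]; assumption.
  + intros capx; split; apply capx; auto.
Qed.

Section Connectives.
Variables (E : Type) (Th : (E -> Prop) -> Prop) (vee wedge : E -> E -> E).
Hypothesis HD : distributive_logic Th vee wedge.

Let union_chains : closed_union_chains Th := proj1 (proj2 HD).

Let tprime_vee Q a b :
  totally_prime_theory Th Q -> Q (vee a b) <-> Q a \/ Q b.
Proof. intros tQ; exact (proj1 (proj2 (proj2 HD) a b Q tQ)). Qed.

Let tprime_wedge Q a b :
  totally_prime_theory Th Q -> Q (wedge a b) <-> Q a /\ Q b.
Proof. intros tQ; exact (proj2 (proj2 (proj2 HD) a b Q tQ)). Qed.

Lemma theory_wedge T a b : Th T -> T (wedge a b) <-> T a /\ T b.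
Proof.
intros ThT; rewrite !(theory_totally_prime_meet E Th union_chains T _ ThT).
split.
- intros ab; split; intros Q tQ TQ; apply (tprime_wedge Q a b tQ), ab; auto.
- intros [aQ bQ] Q tQ TQ; apply (tprime_wedge Q a b tQ).
  split; [apply aQ|apply bQ]; assumption.
Qed.

Definition tprime_above (P : E -> Prop) (c : E) (Q : E -> Prop) : Prop :=
  totally_prime_theory Th Q /\ subset P Q /\ Q c.

Lemma tprime_above_theory P c d : Th P -> ~ P d ->
  (forall Q, totally_prime_theory Th Q -> subset P Q -> Q c \/ Q d) ->
  Th (bigcap (tprime_above P c)).
Proof.
intros ThP Pd cd; apply (proj2 (proj1 HD)).
- destruct (separation E Th union_chains P d ThP Pd) as [Q [tQ [PQ Qd]]].
  exists Q; split; [exact tQ|split; [exact PQ|]].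
  destruct (cd Q tQ PQ); tauto.
- intros Q [tQ _]; exact (proj1 tQ).
Qed.

Lemma prime_theory_vee P a b : prime_theory Th P -> P (vee a b) <-> P a \/ P b.
Proof.
intros Pp; pose proof (proj1 Pp) as ThP.
pose proof (fun x => theory_totally_prime_meet E Th union_chains P x ThP)
  as meetP.
split; [|intros ab; apply meetP; intros Q tQ PQ;
  apply (tprime_vee Q a b tQ); destruct ab; [left|right]; auto].
intros Pab; apply NNPP; intros Pa_b.
assert (ab_above : forall Q, totally_prime_theory Th Q -> subset P Q ->
  Q a \/ Q b) by (intros Q tQ PQ; apply (tprime_vee Q a b tQ), PQ, Pab).
assert (ba_above : forall Q, totally_prime_theory Th Q -> subset P Q ->
  Q b \/ Q a) by (intros Q tQ PQ; apply or_comm, ab_above; assumption).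
assert (P_meet : forall x,
  P x <-> bigcap (tprime_above P a) x /\ bigcap (tprime_above P b) x).
{ intros x; split.
  - intros Px; split; intros Q [_ [PQ _]]; exact (PQ x Px).
  - intros [ax bx]; apply meetP; intros Q tQ PQ.
    destruct (ab_above Q tQ PQ) as [Qa|Qb];
      [apply ax; exact (conj tQ (conj PQ Qa))
      |apply bx; exact (conj tQ (conj PQ Qb))]. }
destruct (prime_theory_meet2 E Th P _ _ Pp
  (tprime_above_theory P a b ThP (fun Pb => Pa_b (or_intror Pb)) ab_above)
  (tprime_above_theory P b a ThP (fun Pa => Pa_b (or_introl Pa)) ba_above)
  P_meet) as [PA | PB];
  apply Pa_b; [left; rewrite PA|right; rewrite PB];
  intros Q [_ [_ Qc]]; exact Qc.
Qed.

Lemma le_L_wedge a b c :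
  le_L Th c (wedge a b) <-> le_L Th c a /\ le_L Th c b.
Proof.
split.
- intros cab; split; intros P Pp Pc;
    apply (theory_wedge P a b (proj1 Pp)), (cab P Pp Pc).
- intros [ca cb] P Pp Pc; apply (theory_wedge P a b (proj1 Pp)).
  split; [apply ca|apply cb]; assumption.
Qed.

Lemma le_L_vee a b c :
  le_L Th (vee a b) c <-> le_L Th a c /\ le_L Th b c.
Proof.
split.
- intros abc; split; intros P Pp Pab;
    apply abc, (prime_theory_vee P a b Pp); auto.
- intros [ac bc] P Pp Pab.
  destruct (proj1 (prime_theory_vee P a b Pp) Pab); [apply ac|apply bc]; auto.
Qed.

End Connectives.

Theorem lemma3p6 (E : Type) (Th : (E -> Prop) -> Prop) (vee wedge : E -> E -> E)
  (HD : distributive_logic Th vee wedge) :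
  (forall a, le_L Th a a) /\
  (forall a b c, le_L Th a b -> le_L Th b c -> le_L Th a c) /\
  (forall a b, le_L Th (wedge a b) a /\ le_L Th (wedge a b) b /\
     forall c, le_L Th c a -> le_L Th c b -> le_L Th c (wedge a b)) /\
  (forall a b, le_L Th a (vee a b) /\ le_L Th b (vee a b) /\
     forall c, le_L Th a c -> le_L Th b c -> le_L Th (vee a b) c) /\
  (forall a b c, eq_L Th (wedge a (vee b c)) (vee (wedge a b) (wedge a c))) /\
  (forall a b c, eq_L Th (vee a (wedge b c)) (wedge (vee a b) (vee a c))) /\
  (forall top bot : E, bounded_logic Th top bot ->
     forall a, le_L Th bot a /\ le_L Th a top).
Proof.
assert (le_refl : forall a, le_L Th a a) by (intros a P _ Pa; exact Pa).
assert (eq_L_intro : forall x y,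
  (forall P, prime_theory Th P -> (P x <-> P y)) -> eq_L Th x y).
{ intros x y xy; split; intros P Pp; apply (xy P Pp). }
pose proof (fun P a b (Pp : prime_theory Th P) =>
  theory_wedge E Th vee wedge HD P a b (proj1 Pp)) as W.
pose proof (prime_theory_vee E Th vee wedge HD) as V.
pose proof (le_L_wedge E Th vee wedge HD) as le_wedge.
pose proof (le_L_vee E Th vee wedge HD) as le_vee.
split; [exact le_refl|split; [|split; [|split; [|split; [|split]]]]].
- intros a b c ab bc P Pp Pa; exact (bc P Pp (ab P Pp Pa)).
- intros a b; pose proof (proj1 (le_wedge a b _) (le_refl (wedge a b))).
  split; [tauto|split; [tauto|]].
  intros c ca cb; apply (proj2 (le_wedge a b c)); auto.
- intros a b; pose proof (proj1 (le_vee a b _) (le_refl (vee a b))).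
  split; [tauto|split; [tauto|]].
  intros c ac bc; apply (proj2 (le_vee a b c)); auto.
- intros a b c; apply eq_L_intro; intros P Pp.
  rewrite W, !V, !W by exact Pp; tauto.
- intros a b c; apply eq_L_intro; intros P Pp.
  rewrite V, !W, !V by exact Pp; tauto.
- intros top bot [top_in bot_out] a; split; intros P [ThP _] Pa.
  + exfalso; exact (bot_out P ThP Pa).
  + exact (top_in P ThP).
Qed.
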